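(* For all integers $k\ge 3$ and $n\ge 1$, $$r_o(C_k,K_{n,n})\;\le\;2n^3+(k-3)\,n(2n-1)+n^2.$$
   Context: An ordered graph $G$ on $n$ vertices has vertex set $[n]=\{1,\dots,n\}$ with the natural linear order. An ordered graph $G$ on $[n]$ is contained in an ordered graph $H$ on a linearly ordered vertex set if there is an injective map $f$ from $[n]$ to $V(H)$ with $f(i)<f(j)$ whenever $i<j$ and $f(i)f(j)\in E(H)$ whenever $ij\in E(G)$; such an image is an ordered copy of $G$. $C_k$ is the ordered cycle on $[k]$ with edges $\{i,i+1\}$ for $1\le i\le k-1$ together with $\{1,k\}$. $K_{n,n}$ is the ordered complete bipartite graph on $[2n]$ with edge set $\{ij: 1\le i\le n<j\le 2n\}$. The online ordered Ramsey game for $(G_1,G_2)$ is played by Builder and Painter on the vertex set $\mathbb N$ with its natural order. On each turn Builder selects a previously unselected pair of vertices (an edge) and Painter then colors it red or blue. Builder wins as soon as the colored edges contain an ordered red copy of $G_1$ or an ordered blue copy of $G_2$; Builder tries to minimize and Painter tries to maximize the number of turns. The online ordered Ramsey number $r_o(G_1,G_2)$ is the number of turns after which Builder wins when both players play optimally. *)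

From mathcomp Require Import all_boot.
Set Implicit Arguments. Unset Strict Implicit. Unset Printing Implicit Defensive.

(* A board: list of colored edges (u, v, c) with u < v, vertices in nat
   (with its natural order); c = true means red, c = false means blue. *)
Definition board := seq (nat * nat * bool).

(* An ordered graph on [N] = {1..N}, given by its size and edge relation
   E i j, consulted only for 1 <= i < j <= N. *)
Record ograph := OGraph { og_size : nat; og_edge : nat -> nat -> bool }.

Definition has_copy (G : ograph) (c : bool) (s : board) : Prop :=
  exists f : nat -> nat,
    (forall i j, 1 <= i -> i < j -> j <= og_size G -> f i < f j) /\
    (forall i j, 1 <= i -> i < j -> j <= og_size G -> og_edge G i j ->
        (f i, f j, c) \in s).

Definition cycleG (k : nat) : ograph :=
  OGraph k (fun i j => (j == i.+1) || ((i == 1) && (j == k))).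

Definition KnnG (n : nat) : ograph :=
  OGraph (2 * n) (fun i j => (i <= n) && (n < j)).

Definition builder_won (G1 G2 : ograph) (s : board) : Prop :=
  has_copy G1 true s \/ has_copy G2 false s.

Fixpoint builder_wins_within (G1 G2 : ograph) (m : nat) (s : board) : Prop :=
  builder_won G1 G2 s \/
  match m with
  | 0 => False
  | m'.+1 => exists u v, u < v /\ (forall c, (u, v, c) \notin s) /\
             forall c : bool, builder_wins_within G1 G2 m' ((u, v, c) :: s)
  end.

Definition online_ramsey_le (G1 G2 : ograph) (m : nat) : Prop :=
  builder_wins_within G1 G2 m [::].

From mathcomp Require Import all_boot zify.

Set Implicit Arguments. Unset Strict Implicit. Unset Printing Implicit Defensive.

(* Builder first sweeps fresh vertices far to the right of L = {0, ..., n-1},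
   asking all n edges from L to each of them.  A vertex blue to all of L is
   kept, and n such vertices give a blue K_{n,n}; any other vertex is a red
   neighbour of some vertex of L.  By pigeonhole, after 2n^2 vertices some x
   in L has 2n red neighbours, spaced so that k - 3 rounds fit between the
   lower half BL and the upper half BR.  In each round Builder sweeps 2n - 1
   new vertices just above BL: either n of them are blue to BL, or n of them
   extend the red paths from x by one edge and become the new BL.  Finally the
   n^2 edges between BL, now ends of red paths of length k - 2 from x, and BR
   are either all blue or close a red C_k through x. *)

Lemma has_copy_subset G c (s s' : board) :
  {subset s <= s'} -> has_copy G c s -> has_copy G c s'.
Proof. by move=> ss' [f [f_incr f_edge]]; exists f; split=> // i j *; apply/ss'/f_edge. Qed.

Section Game.

Variables G1 G2 : ograph.

Local Notation won := (builder_won G1 G2).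
Local Notation wins := (builder_wins_within G1 G2).

Lemma builder_won_subset (s s' : board) : {subset s <= s'} -> won s -> won s'.
Proof. by move=> ss' [red|blue]; [left|right]; apply: has_copy_subset ss' _. Qed.

Lemma wins_within_won m s : won s -> wins m s.
Proof. by case: m => [|m] won_s; left. Qed.

Lemma wins_within_leq m m' s : m <= m' -> wins m s -> wins m' s.
Proof.
elim: m m' s => [|m IH] [|m'] s //= le_mm'.
- by case=> [won_s|[]]; left.
- case=> [won_s|[u [v [uv [fresh next]]]]]; first by left.
  by right; exists u, v; do 2!split=> //; move=> c; apply: IH (next c).
Qed.

(* Builder replays the strategy for [s]; a pair already colored on [s'] is skipped. *)
Lemma wins_within_subset m (s s' : board) : {subset s <= s'} -> wins m s -> wins m s'.
Proof.
elim: m s s' => [|m IH] s s' ss' /=.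
  by case=> // won_s; left; apply: builder_won_subset won_s.
case=> [won_s|[u [v [uv [_ next]]]]]; first by left; apply: builder_won_subset won_s.
have [/existsP[c uvc]|fresh] := boolP [exists c, (u, v, c) \in s'].
  apply: (wins_within_leq (leqnSn m)); apply: (IH _ _ _ (next c)) => e.
  by rewrite inE => /predU1P[->|/ss'].
right; exists u, v; split=> //; split=> [c|c].
  by apply: contraNN fresh => uvc; apply/existsP; exists c.
by apply: IH (next c) => e; rewrite !inE => /predU1P[->|/ss'->]; rewrite ?eqxx ?orbT.
Qed.

Lemma wins_within_ask m s u v : u < v ->
  (forall c, wins m ((u, v, c) :: s)) -> wins m.+1 s.
Proof.
move=> uv next.
have [/existsP[c uvc]|fresh] := boolP [exists c, (u, v, c) \in s].
  apply: (wins_within_leq (leqnSn m)); apply: wins_within_subset (next c) => e.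
  by rewrite inE => /predU1P[->|].
right; exists u, v; split=> //; split=> // c.
by apply: contraNN fresh => uvc; apply/existsP; exists c.
Qed.

Lemma wins_within_star (src : seq nat) w m s :
  (forall x, x \in src -> x < w) ->
  (forall s', {subset s <= s'} -> (forall x, x \in src -> (x, w, false) \in s') ->
     wins m s') ->
  (forall s' x, {subset s <= s'} -> x \in src -> (x, w, true) \in s' -> wins m s') ->
  wins (size src + m) s.
Proof.
elim: src s => [|x src IH] s src_w blue red; first by apply: blue.
have sub_cons c : {subset s <= (x, w, c) :: s} by move=> e e_s; rewrite inE e_s orbT.
apply: (wins_within_ask (src_w x (mem_head _ _))); case.
  apply: (wins_within_leq (leq_addl _ _)).
  exact: red (sub_cons true) (mem_head _ _) (mem_head _ _).
apply: IH => [y y_src|s' ss' blue'|s' y ss' y_src].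
- by apply: src_w; rewrite inE y_src orbT.
- apply: blue => [e /sub_cons/ss'//|y]; rewrite inE => /predU1P[->|/blue'//].
  by apply: ss'; rewrite mem_head.
- by apply: red => [e /sub_cons/ss'//|]; rewrite inE y_src orbT.
Qed.

End Game.

Lemma sorted_ltn_sort_uniq (L : seq nat) : uniq L -> sorted ltn (sort leq L).
Proof.
by move=> uL; rewrite ltn_sorted_uniq_leq sort_uniq uL (sort_sorted leq_total).
Qed.

Lemma has_copy_Knn n (L R : seq nat) (s : board) :
  n <= size L -> n <= size R -> uniq L -> uniq R ->
  {in L & R, forall x y, x < y} -> {in L & R, forall x y, (x, y, false) \in s} ->
  has_copy (KnnG n) false s.
Proof.
move=> sL sR uL uR LR blue.
set L' := sort leq L; set R' := sort leq R.
have oL := sorted_ltn_sort_uniq uL; have oR := sorted_ltn_sort_uniq uR.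
have mL i : i < n -> nth 0 L' i \in L.
  by move=> lt_in; rewrite -(mem_sort leq) mem_nth // size_sort (leq_trans lt_in).
have mR i : i < n -> nth 0 R' i \in R.
  by move=> lt_in; rewrite -(mem_sort leq) mem_nth // size_sort (leq_trans lt_in).
exists (fun i => if i <= n then nth 0 L' i.-1 else nth 0 R' (i - n).-1).
split=> /= i j i1 ij jn.
- case: (leqP i n) => hi; case: (leqP j n) => hj.
  + by apply: (sorted_ltn_nth ltn_trans 0 oL); rewrite ?inE ?size_sort /=; lia.
  + by apply: LR; [apply: mL | apply: mR]; lia.
  + lia.
  + by apply: (sorted_ltn_nth ltn_trans 0 oR); rewrite ?inE ?size_sort /=; lia.
- case/andP=> hi hj; rewrite hi leqNgt hj /=.
  by apply: blue; [apply: mL | apply: mR]; lia.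
Qed.

Definition red_edge (s : board) : rel nat := fun u v => (u < v) && ((u, v, true) \in s).

Definition red_path (s : board) (a x l : nat) :=
  exists q, [/\ path (red_edge s) a q, size q = l & last a q = x].

Lemma red_path_subset (s s' : board) a x l :
  {subset s <= s'} -> red_path s a x l -> red_path s' a x l.
Proof.
move=> ss' [q [pq sq lq]]; exists q; split=> //.
by apply: sub_path pq => u v /andP[uv /ss' uv_s']; rewrite /red_edge uv uv_s'.
Qed.

Lemma red_path_rcons (s : board) a x y l :
  red_path s a x l -> red_edge s x y -> red_path s a y l.+1.
Proof.
move=> [q [pq sq lq]] xy; exists (rcons q y).
by rewrite rcons_path pq lq size_rcons sq last_rcons.
Qed.

Lemma has_copy_cycle k (s : board) a y :
  red_path s a y k.-1 -> (a, y, true) \in s -> has_copy (cycleG k) true s.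
Proof.
move=> [q [pq sq lq]] ay.
have oq : sorted ltn (a :: q) by apply: sub_path pq => u v /andP[].
exists (fun i => nth 0 (a :: q) i.-1).
split=> /= i j i1 ij jk.
- by apply: (sorted_ltn_nth ltn_trans 0 oq); rewrite ?inE /= ?sq /=; lia.
- case/orP=> [/eqP->|/andP[/eqP-> /eqP->]].
    have /(pathP 0) consec := pq; rewrite sq in consec.
    have /andP[_] : red_edge s (nth 0 (a :: q) i.-1) (nth 0 q i.-1) by apply: consec; lia.
    by case: i i1 {ij jk consec}.
  have -> : k.-1 = (size (a :: q)).-1 by rewrite /= sq; lia.
  by rewrite nth_last /= lq.
Qed.

Definition red_witnessed (L : seq nat) (s : board) (R : seq (nat * nat)) :=
  all (fun p => (p.1 \in L) && ((p.1, p.2, true) \in s)) R.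

Lemma red_witnessed_subset L (s s' : board) R :
  {subset s <= s'} -> red_witnessed L s R -> red_witnessed L s' R.
Proof. by move=> ss'; apply: sub_all => p /andP[-> /ss']. Qed.

(* Builder sweeps the vertices [w] of [P], asking all edges from [L] to [w]:
   [w] joins [Good] if they are all blue, otherwise one red edge [(x, w)] is
   recorded in [R].  The sweep ends with a blue [K_{n,n}] once [Good] has [n]
   vertices, or with [finish] as soon as [enough R]. *)
Section Sweep.

Variables (G1 : ograph) (n N m : nat) (L P : seq nat) (enough : pred (seq (nat * nat))).
Variable s0 : board.

Local Notation wins := (builder_wins_within G1 (KnnG n)).

Hypotheses (size_L : size L = n) (uniq_L : uniq L) (uniq_P : uniq P).
Hypothesis L_below_P : {in L & P, forall x w, x < w}.
Hypothesis enough_large : forall R, {subset map fst R <= L} -> N <= size R -> enough R.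
Hypothesis finish : forall s R, {subset s0 <= s} -> enough R -> red_witnessed L s R ->
  uniq (map snd R) -> {subset map snd R <= P} -> wins m s.

Lemma wins_within_sweep_stop (Good : seq nat) (R : seq (nat * nat)) Q s :
  {subset s0 <= s} -> uniq (Q ++ Good ++ map snd R) ->
  {subset Q ++ Good ++ map snd R <= P} ->
  {in L & Good, forall x w, (x, w, false) \in s} -> red_witnessed L s R ->
  (size Good < n -> size R < N -> wins (size Q * n + m) s) -> wins (size Q * n + m) s.
Proof.
move=> s0s uT PT blue red continue.
have [uGood uR] : uniq Good /\ uniq (map snd R).
  by move: uT; rewrite !cat_uniq => /and3P[_ _ /and3P[]].
have [n_Good|small_Good] := leqP n (size Good).
  apply/wins_within_won/or_intror.
  apply: (has_copy_Knn (L := L) (R := Good)) => //; first by rewrite size_L.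
  by move=> x w xL wG; apply: L_below_P => //; apply: PT; rewrite !mem_cat wG orbT.
have [enough_R|not_enough] := boolP (enough R).
  apply: (wins_within_leq (leq_addl _ _)); apply: (finish (R := R)) => // w wR.
  by apply: PT; rewrite !mem_cat wR !orbT.
apply: continue => //; rewrite ltnNge; apply: contra not_enough; apply: enough_large.
by move=> x /mapP[[y w] /(allP red) /andP[yL _] ->].
Qed.

Lemma wins_within_sweep_from (Q Good : seq nat) s (R : seq (nat * nat)) :
  {subset s0 <= s} -> uniq (Q ++ Good ++ map snd R) ->
  {subset Q ++ Good ++ map snd R <= P} ->
  {in L & Good, forall x w, (x, w, false) \in s} -> red_witnessed L s R ->
  n + N - 1 <= size Q + size Good + size R ->
  wins (size Q * n + m) s.
Proof.
elim: Q s Good R => [|w Q IH] s Good R s0s uT PT blue red room;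
  apply: (wins_within_sweep_stop (Good := Good) (R := R)) => // small_Good small_R.
  by exfalso; move: room => /=; lia.
have wP : w \in P by apply: PT; rewrite mem_head.
have perm_Good : perm_eq ((w :: Q) ++ Good ++ map snd R) (Q ++ (w :: Good) ++ map snd R).
  by apply/permP => p; rewrite /= !count_cat /= ?count_cat; lia.
have perm_R : perm_eq ((w :: Q) ++ Good ++ map snd R) (Q ++ Good ++ w :: map snd R).
  by apply/permP => p; rewrite /= !count_cat /= ?count_cat; lia.
rewrite /= mulSn -addnA -[X in builder_wins_within _ _ (X + _)]size_L.
apply: (wins_within_star (w := w)) => [x xL|s' ss' blue_w|s' x ss' xL xw].
- exact: L_below_P.
- apply: (IH _ (w :: Good) R) => [e /s0s/ss'//|||||].
  + by rewrite -(perm_uniq perm_Good).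
  + by move=> e; rewrite -(perm_mem perm_Good); apply: PT.
  + move=> x e xL; rewrite inE => /predU1P[->|eG]; first exact: blue_w.
    exact/ss'/blue.
  + exact: red_witnessed_subset red.
  + by move: room => /=; lia.
- apply: (IH _ Good ((x, w) :: R)) => [e /s0s/ss'//|||||].
  + by rewrite -(perm_uniq perm_R).
  + by move=> e; rewrite -(perm_mem perm_R); apply: PT.
  + by move=> y e yL eG; apply/ss'/blue.
  + by rewrite /= xL xw; apply: red_witnessed_subset red.
  + by move: room => /=; lia.
Qed.

Lemma wins_within_sweep : n + N - 1 <= size P -> wins (size P * n + m) s0.
Proof.
move=> room; apply: (wins_within_sweep_from (Good := [::]) (R := [::])) => //.
- by rewrite !cats0.
- by move=> w; rewrite !cats0.
- by rewrite addn0 addn0.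
Qed.

End Sweep.

Lemma pigeonhole_count (T : eqType) (L s : seq T) t :
  {subset s <= L} -> size L * t < size s -> has (fun x => t < count_mem x s) L.
Proof.
move=> sL; apply: contraLR; rewrite -all_predC -leqNgt => /allP few.
have -> : size s = \sum_(x <- undup s) count_mem x s.
  rewrite -(perm_size (perm_count_undup s)) size_flatten /shape -map_comp sumnE big_map.
  by apply: eq_bigr => x _; rewrite /= size_nseq.
apply: (@leq_trans (\sum_(x <- undup s) t)).
  rewrite !big_seq; apply: leq_sum => x.
  by rewrite mem_undup => /sL /few /=; rewrite -leqNgt.
rewrite big_const_seq iter_addn_0 count_predT mulnC leq_mul2r.
by rewrite uniq_leq_size ?undup_uniq ?orbT // => x; rewrite mem_undup => /sL.
Qed.

Lemma wins_within_extend_paths n l r (s : board) a lo (BL BR : seq nat) :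
  size BL = n -> uniq BL -> size BR = n -> uniq BR ->
  (forall x, x \in BL -> red_path s a x l) -> (forall x, x \in BL -> x < lo) ->
  (forall y, y \in BR -> lo + r * (2 * n) <= y) ->
  (forall y, y \in BR -> (a, y, true) \in s) ->
  builder_wins_within (cycleG (l + r + 2)) (KnnG n) (r * (n * (2 * n - 1)) + n * n) s.
Proof.
elim: r l s lo BL => [|r IH] l s lo BL sBL uBL sBR uBR paths BL_lo lo_BR aBR.
  have -> : 0 * (n * (2 * n - 1)) + n * n = size BR * n + 0 by rewrite sBR addn0.
  apply: (wins_within_sweep (N := 1) (L := BL) (enough := fun R => 0 < size R)) => //.
  - move=> x y /BL_lo x_lo /lo_BR; lia.
  - move=> s' [//|[x w] R] ss' _ /andP[/andP[xBL xw] _] _ /(_ w (mem_head _ _)) wBR.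
    apply/wins_within_won/or_introl; apply: has_copy_cycle (ss' _ (aBR w wBR)).
    rewrite addn0 addn2; apply: red_path_rcons (red_path_subset ss' (paths x xBL)) _.
    by rewrite /red_edge xw andbT (leq_trans (BL_lo x xBL)) // -(addn0 lo) lo_BR.
  - by rewrite sBR addnK.
rewrite -(addSnnS l r).
have -> : r.+1 * (n * (2 * n - 1)) + n * n =
          size (iota lo (2 * n - 1)) * n + (r * (n * (2 * n - 1)) + n * n).
  by rewrite size_iota mulSn mulnC addnA.
apply: (wins_within_sweep (N := n) (L := BL) (enough := fun R => n <= size R)) => //.
- exact: iota_uniq.
- by move=> x y /BL_lo x_lo; rewrite mem_iota; lia.
- move=> s' R ss' n_R red uR PR.
  apply: (IH _ _ (lo + (2 * n - 1)) (take n (map snd R))) => //.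
  + by rewrite size_takel // size_map.
  + exact: take_uniq.
  + move=> w /mem_take wR; have /mapP[[x w'] xwR /= w_w'] := wR; subst w'.
    have /andP[xBL xw] := allP red _ xwR.
    apply: red_path_rcons (red_path_subset ss' (paths x xBL)) _.
    rewrite /red_edge xw andbT (leq_trans (BL_lo x xBL)) //.
    by move: (PR w wR); rewrite mem_iota => /andP[].
  + by move=> w /mem_take /PR; rewrite mem_iota => /andP[].
  + by move=> y /lo_BR; rewrite mulSn; lia.
  + by move=> y /aBR /ss'.
- by rewrite size_iota; lia.
Qed.

Definition red_nbrs (x : nat) (R : seq (nat * nat)) := [seq p.2 | p <- R & p.1 == x].

Lemma size_red_nbrs x R : size (red_nbrs x R) = count_mem x (map fst R).
Proof. by rewrite size_map size_filter count_map. Qed.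

Lemma red_nbrs_uniq x R : uniq (map snd R) -> uniq (red_nbrs x R).
Proof. by apply: subseq_uniq; apply/map_subseq/filter_subseq. Qed.

Lemma mem_red_nbrs x R v : (v \in red_nbrs x R) = ((x, v) \in R).
Proof.
apply/mapP/idP => [[[y w]] + /= ->|xvR].
  by rewrite mem_filter /= => /andP[/eqP->].
by exists (x, v); rewrite ?mem_filter /= ?eqxx.
Qed.

Lemma bigmax_addn_lt (X : seq nat) c y :
  X != [::] -> (forall x, x \in X -> x + c < y) -> \max_(x <- X) x + c < y.
Proof.
case: X => [//|x0 X] _ Xy.
have c_y : c < y := leq_ltn_trans (leq_addl _ _) (Xy x0 (mem_head _ _)).
suff : \max_(x <- x0 :: X) x <= y - c.+1 by lia.
by apply/bigmax_leqP_seq => x xX _; have := Xy x xX; lia.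
Qed.

Lemma wins_within_red_fan k n (s : board) a (V : seq nat) :
  3 <= k -> 0 < n -> 2 * n <= size V -> uniq V ->
  (forall v, v \in V -> a < v /\ (a, v, true) \in s) ->
  {in V &, forall u v, u < v -> u + (k - 3) * (2 * n) < v} ->
  builder_wins_within (cycleG k) (KnnG n) ((k - 3) * (n * (2 * n - 1)) + n * n) s.
Proof.
move=> k3 n_gt0 sV uV aV gapV.
set V' := sort leq V; set BL := take n V'; set BR := take n (drop n V').
have mV' v : (v \in V') = (v \in V) by rewrite mem_sort.
have sV' : size V' = size V by rewrite size_sort.
have BL_BR : {in BL & BR, forall x y, x < y}.
  move: (sorted_ltn_sort_uniq uV); rewrite -/V' (sorted_pairwise ltn_trans).
  rewrite -(cat_take_drop n V') pairwise_cat => /and3P[/allrelP lt _ _] x y xBL /mem_take.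
  exact: lt.
have sBL : size BL = n by rewrite size_takel // sV'; lia.
have -> : cycleG k = cycleG (1 + (k - 3) + 2) by congr cycleG; lia.
apply: (wins_within_extend_paths (a := a) (lo := (\max_(x <- BL) x).+1) (BL := BL) (BR := BR))
  => //.
- by rewrite take_uniq // sort_uniq.
- by rewrite size_takel // size_drop sV'; lia.
- by rewrite take_uniq // drop_uniq // sort_uniq.
- move=> x /mem_take; rewrite mV' => /aV[ax axs]; exists [:: x].
  by split=> //=; rewrite /red_edge ax axs.
- by move=> x xBL; rewrite ltnS; apply: leq_bigmax_seq.
- move=> y yBR; rewrite addSn; apply: bigmax_addn_lt => [|x xBL].
    by rewrite -size_eq0 sBL -lt0n.
  have [xV yV] : x \in V /\ y \in V.
    by rewrite -!mV' (mem_take xBL) (mem_drop (mem_take yBR)).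
  exact: gapV (BL_BR x y xBL yBR).
- by move=> y /mem_take /mem_drop; rewrite mV' => /aV[].
Qed.

Lemma multiples_gap G c i j : c < G -> G * i < G * j -> G * i + c < G * j.
Proof.
move=> cG; rewrite ltn_mul2l => /andP[_ ij].
have : G * i.+1 <= G * j by rewrite leq_mul2l ij orbT.
by rewrite mulnS; lia.
Qed.

(* The swept vertices are multiples of [2 k n], leaving room between any two
   of them for the [k - 3] rounds of [2 n - 1] vertices each. *)
Lemma wins_within_first_phase k n : 3 <= k -> 0 < n ->
  builder_wins_within (cycleG k) (KnnG n)
    (2 * n * n * n + ((k - 3) * (n * (2 * n - 1)) + n * n)) [::].
Proof.
move=> k3 n_gt0.
set G := 2 * k * n; set P := [seq G * i | i <- iota 1 (2 * n * n)].
have L_below_P : {in iota 0 n & P, forall x w, x < w}.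
  move=> x w; rewrite mem_iota => /andP[_ xn] /mapP[i]; rewrite mem_iota => /andP[i1 _] ->.
  by rewrite /G; nia.
have -> : 2 * n * n * n = size P * n by rewrite size_map size_iota.
apply: (wins_within_sweep (N := n * (2 * n - 1) + 1) (L := iota 0 n)
  (enough := fun R => has (fun x => 2 * n - 1 < count_mem x (map fst R)) (iota 0 n))).
- exact: size_iota.
- exact: iota_uniq.
- rewrite map_inj_uniq ?iota_uniq // => i j /eqP.
  by rewrite eqn_pmul2l /G 1?muln_gt0 ?n_gt0 ?andbT; lia.
- exact: L_below_P.
- by move=> R RL large; apply: pigeonhole_count; rewrite // size_iota size_map -addn1.
- move=> s' R _ /hasP[x xL many] red uR PR.
  have nbrs_P v : (x, v) \in R -> v \in P by move=> xvR; apply: PR (map_f snd xvR).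
  apply: (wins_within_red_fan (a := x) (V := red_nbrs x R)) => //.
  + by rewrite size_red_nbrs; lia.
  + exact: red_nbrs_uniq.
  + move=> v; rewrite mem_red_nbrs => xvR; have /andP[_ xv] := allP red _ xvR.
    by split=> //; apply: L_below_P xL (nbrs_P v xvR).
  + move=> u v; rewrite !mem_red_nbrs => /nbrs_P/mapP[i _ ->] /nbrs_P/mapP[j _ ->].
    by apply: multiples_gap; rewrite /G; lia.
- by rewrite size_map size_iota; lia.
Qed.

Theorem theorem4 (k n : nat) : 3 <= k -> 1 <= n ->
  online_ramsey_le (cycleG k) (KnnG n)
    (2 * n ^ 3 + (k - 3) * (n * (2 * n - 1)) + n ^ 2).
Proof.
have -> : 2 * n ^ 3 = 2 * n * n * n by rewrite -!mulnA mulnn -expnS.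
by rewrite -addnA -mulnn; apply: wins_within_first_phase.
Qed.
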